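(* Let $G$ be a finite group acting linearly, isometrically and effectively on $\mathbb{R}^n$, let $X$ be a random variable with $\mathbb{E}(\|X\|^2)<+\infty$ and $t_0=\mathbb{E}(X)$ a regular point. If the support of the law of $X$ is a compact set contained in the interior of $\mathrm{Cone}(t_0)$, then $t_0$ is a local minimiser of $F$ (i.e. $[t_0]$ is a Karcher mean of $[X]$).
   Context: A group action is linear and isometric if each $x\mapsto g\cdot x$ is linear with $\|g\cdot x\|=\|x\|$, and effective if $x\mapsto g\cdot x$ is the identity only for $g=e_G$. A point $m$ is regular if $\{g: g\cdot m=m\}=\{e_G\}$. For regular $m$, $\mathrm{Cone}(m)=\{x: \|x-m\|\le\|x-g\cdot m\| \ \forall g\in G\}$. The support of $X$ is the set of $x$ with $\mathbb{P}(X\in B(x,r))>0$ for all $r>0$. $F(m)=\mathbb{E}\big(\min_{g\in G}\|g\cdot X-m\|^2\big)$. *)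

(* R^n is modelled as row vectors 'rV[R]_n with the
   Euclidean norm defined below (the library's default norm on matrices is the
   sup-norm; it induces the same topology, which we use for compact/interior/near). *)
From HB Require Import structures.
From mathcomp Require Import all_boot all_order all_algebra all_fingroup.
From mathcomp Require Import all_classical all_reals all_analysis.
Set Implicit Arguments. Unset Strict Implicit. Unset Printing Implicit Defensive.
Import Order.TTheory GRing.Theory Num.Theory.
Import numFieldNormedType.Exports.
Local Open Scope classical_set_scope.
Local Open Scope ring_scope.

Definition enorm (R : realType) (n : nat) (x : 'rV[R]_n) : R :=
  Num.sqrt (\sum_(i < n) x ord0 i ^+ 2).

Definition is_group_action (R : realType) (n : nat) (gT : finGroupType)
  (act : gT -> 'rV[R]_n -> 'rV[R]_n) : Prop :=
  (forall x, act 1%g x = x) /\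
  (forall g h x, act (g * h)%g x = act g (act h x)).

Definition linear_action (R : realType) (n : nat) (gT : finGroupType)
  (act : gT -> 'rV[R]_n -> 'rV[R]_n) : Prop :=
  forall g (a : R) x y, act g (a *: x + y) = a *: act g x + act g y.

Definition isometric_action (R : realType) (n : nat) (gT : finGroupType)
  (act : gT -> 'rV[R]_n -> 'rV[R]_n) : Prop :=
  forall g x, enorm (act g x) = enorm x.

Definition effective_action (R : realType) (n : nat) (gT : finGroupType)
  (act : gT -> 'rV[R]_n -> 'rV[R]_n) : Prop :=
  forall g, (forall x, act g x = x) -> g = 1%g.

Definition regular_point (R : realType) (n : nat) (gT : finGroupType)
  (act : gT -> 'rV[R]_n -> 'rV[R]_n) (m : 'rV[R]_n) : Prop :=
  forall g, act g m = m -> g = 1%g.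

Definition Cone (R : realType) (n : nat) (gT : finGroupType)
  (act : gT -> 'rV[R]_n -> 'rV[R]_n) (m : 'rV[R]_n) : set 'rV[R]_n :=
  [set x | forall g : gT, enorm (x - m) <= enorm (x - act g m)].

Definition law_support (d : measure_display) (T : measurableType d)
  (R : realType) (P : probability T R) (n : nat) (X : T -> 'rV[R]_n)
  : set 'rV[R]_n :=
  [set x | forall r : R, 0 < r -> (0 < P [set w | (enorm (X w - x) < r)%R])%E].

(* min_{g in G} ||g.x - m||^2 (the big min is seeded with the value at g = 1,
   which belongs to the index set, so it is the true minimum) *)
Definition min_orbit_dist2 (R : realType) (n : nat) (gT : finGroupType)
  (act : gT -> 'rV[R]_n -> 'rV[R]_n) (x m : 'rV[R]_n) : R :=
  \big[Num.min/enorm (x - m) ^+ 2]_(g : gT) (enorm (act g x - m) ^+ 2).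

Definition Fmean (d : measure_display) (T : measurableType d)
  (R : realType) (P : probability T R) (n : nat) (gT : finGroupType)
  (act : gT -> 'rV[R]_n -> 'rV[R]_n) (X : T -> 'rV[R]_n) (m : 'rV[R]_n)
  : \bar R :=
  'E_P[fun w => min_orbit_dist2 act (X w) m].

From HB Require Import structures.
From mathcomp Require Import all_boot all_order all_algebra all_fingroup.
From mathcomp Require Import all_classical all_reals all_analysis.
From mathcomp Require Import measurable_realfun.
From mathcomp Require Import ring lra.
Import Order.TTheory GRing.Theory Num.Theory.
Import numFieldNormedType.Exports.
Local Open Scope classical_set_scope.
Local Open Scope ring_scope.
Set Implicit Arguments. Unset Strict Implicit. Unset Printing Implicit Defensive.

(* X lies almost surely in its support S, since every point outside S has a
   null rational ball around it. The cone inequalities are linear in x and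
   strict on the compact S for m = t0, so S stays inside Cone(m) for m near t0.
   On Cone(m) the orbit minimum is attained at the identity, hence near t0
   F(m) = E||X - m||^2, which is minimised at the mean t0. *)

Section Euclidean.
Variables (R : realType) (n : nat).
Implicit Types (x y z v : 'rV[R]_n) (r : R).

Definition sqnorm x : R := \sum_(i < n) x ord0 i ^+ 2.
Definition dot x y : R := \sum_(i < n) x ord0 i * y ord0 i.

Lemma sqnorm_ge0 x : 0 <= sqnorm x.
Proof. by apply: sumr_ge0 => i _; rewrite sqr_ge0. Qed.

Lemma sqnorm_gt0 x : x != 0 -> 0 < sqnorm x.
Proof.
move=> x0; rewrite lt_def sqnorm_ge0 andbT; apply: contra x0 => /eqP x2_0.
apply/eqP/rowP => i; rewrite mxE; apply/eqP; rewrite -sqrf_eq0; apply/eqP.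
by apply: (psumr_eq0P _ x2_0) => // j _; exact: sqr_ge0.
Qed.

Lemma sqr_enorm x : enorm x ^+ 2 = sqnorm x.
Proof. by rewrite /enorm sqr_sqrtr // sqnorm_ge0. Qed.

Lemma ler_enorm x y : (enorm x <= enorm y) = (sqnorm x <= sqnorm y).
Proof. by rewrite /enorm ler_sqrt // sqnorm_ge0. Qed.

Lemma ltr_enorm x r : 0 < r -> (enorm x < r) = (sqnorm x < r ^+ 2).
Proof.
move=> r0; rewrite -[X in _ < X](ger0_norm (ltW r0)) -sqrtr_sqr.
by rewrite /enorm ltr_sqrt // exprn_gt0.
Qed.

Lemma sqnormBC x y : sqnorm (x - y) = sqnorm (y - x).
Proof. by rewrite -opprB /sqnorm; apply: eq_bigr => i _; rewrite mxE sqrrN. Qed.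

Lemma sqnormB x y : sqnorm (x - y) = sqnorm x - 2 * dot x y + sqnorm y.
Proof.
rewrite /sqnorm /dot mulr_sumr -sumrN -!big_split /=; apply: eq_bigr => i _.
by rewrite !mxE; ring.
Qed.

Lemma sqnormB_split x y z :
  sqnorm (x - z) = sqnorm (x - y) + (2 * dot (x - y) (y - z) + sqnorm (y - z)).
Proof.
rewrite /sqnorm /dot mulr_sumr -!big_split /=; apply: eq_bigr => i _.
by rewrite !mxE; ring.
Qed.

Lemma sqnormB_le x y z : sqnorm (x - z) <= 2 * sqnorm (x - y) + 2 * sqnorm (y - z).
Proof.
rewrite /sqnorm !mulr_sumr -big_split /=; apply: ler_sum => i _; rewrite !mxE.
have := sqr_ge0 (x ord0 i - 2 * y ord0 i + z ord0 i); nra.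
Qed.

Lemma dotBr x y z : dot x (y - z) = dot x y - dot x z.
Proof.
by rewrite /dot -sumrN -big_split /=; apply: eq_bigr => i _; rewrite !mxE; ring.
Qed.

Lemma dotDZl x v r : dot (x + r *: v) v = dot x v + r * sqnorm v.
Proof.
rewrite /dot /sqnorm mulr_sumr -big_split; apply: eq_bigr => i _.
by rewrite !mxE /=; ring.
Qed.

Lemma normr_coord_le x i : `|x ord0 i| <= `|x|.
Proof.
rewrite [leRHS]/Num.Def.normr /= mx_normrE.
by apply/bigmax_geP; right => /=; exists (ord0, i).
Qed.

Lemma ler_norm_dot x y r (C : 'I_n -> R) :
  (forall j, `|x ord0 j| <= r) -> (forall j, `|y ord0 j| <= C j) ->
  `|dot x y| <= \sum_j r * C j.
Proof.
move=> xr yC; apply: le_trans (ler_norm_sum _ _ _) _.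
by apply: ler_sum => j _; rewrite normrM; apply: ler_pM.
Qed.

Lemma continuous_dot v : continuous (dot^~ v).
Proof.
rewrite /dot; elim: (index_enum _) => [|i s IHs].
  by under eq_fun do rewrite big_nil; exact: cst_continuous.
under eq_fun do rewrite big_cons.
move=> x; apply: (@continuousD _ _ _ (fun x : 'rV[R]_n => x ord0 i * v ord0 i));
  last exact: IHs.
apply: (@continuousM _ _ (fun x : 'rV[R]_n => x ord0 i) (fun=> v ord0 i)).
  exact: coord_continuous.
exact: cst_continuous.
Qed.

End Euclidean.

Section LinearIsometricAction.
Variables (R : realType) (n : nat) (gT : finGroupType)
  (act : gT -> 'rV[R]_n -> 'rV[R]_n).
Hypothesis act_group : is_group_action act.
Hypothesis act_linear : linear_action act.
Hypothesis act_isometric : isometric_action act.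
Implicit Types (x y m u : 'rV[R]_n) (g : gT).

Lemma act0 g : act g 0 = 0.
Proof.
have := act_linear g 1 0 0; rewrite scaler0 !addr0 scale1r => act00.
by apply: (addrI (act g 0)); rewrite -act00 addr0.
Qed.

Lemma actD g x y : act g (x + y) = act g x + act g y.
Proof. by have := act_linear g 1 x y; rewrite !scale1r. Qed.

Lemma actZ g a x : act g (a *: x) = a *: act g x.
Proof. by have := act_linear g a x 0; rewrite !addr0 act0 addr0. Qed.

Lemma actB g x y : act g (x - y) = act g x - act g y.
Proof. by rewrite actD -scaleN1r actZ scaleN1r. Qed.

Lemma act_coordE g x j :
  act g x ord0 j = \sum_(i < n) x ord0 i * act g (delta_mx ord0 i) ord0 j.
Proof.
rewrite {1}[x]row_sum_delta.
rewrite (big_morph (act g) (actD g) (act0 g)) summxE.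
by apply: eq_bigr => i _; rewrite actZ mxE.
Qed.

Lemma sqnorm_act g x : sqnorm (act g x) = sqnorm x.
Proof. by rewrite -!sqr_enorm act_isometric. Qed.

Lemma le_enorm_orbitE x m g :
  (enorm (x - m) <= enorm (x - act g m)) = (dot x (act g m - m) <= 0).
Proof. by rewrite ler_enorm !sqnormB sqnorm_act dotBr; apply/idP/idP; lra. Qed.

(* ||g.x - m|| = ||x - g^-1.m|| by isometry. *)
Lemma min_orbit_dist2_cone x m : Cone act m x ->
  min_orbit_dist2 act x m = sqnorm (x - m).
Proof.
move=> xCm; rewrite /min_orbit_dist2 sqr_enorm.
have le_orbit g : sqnorm (x - m) <= enorm (act g x - m) ^+ 2.
  have -> : act g x - m = act g (x - act g^-1 m).
    by rewrite actB -(proj2 act_group) mulgV (proj1 act_group).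
  by rewrite sqr_enorm sqnorm_act -ler_enorm xCm.
elim: (index_enum gT) => [|g s IHs]; first by rewrite big_nil.
rewrite big_cons; apply/le_anti/andP; split.
  by rewrite ge_min IHs lexx orbT.
by rewrite le_min le_orbit IHs lexx.
Qed.

Lemma normr_actB_coord_le g u j :
  `|(act g u - u) ord0 j| <=
    `|u| * (\sum_(k < n) `|act g (delta_mx ord0 k) ord0 j| + 1).
Proof.
rewrite !mxE act_coordE; apply: le_trans (ler_normB _ _) _.
rewrite mulrDr mulr1 lerD ?normr_coord_le //.
apply: le_trans (ler_norm_sum _ _ _) _.
rewrite mulr_sumr; apply: ler_sum => k _; rewrite normrM.
by apply: ler_wpM2r => //; exact: normr_coord_le.
Qed.

Lemma ler_norm_dot_actB g :
  exists2 K : R, 0 <= K & forall x u r, (forall j, `|x ord0 j| <= r) ->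
    `|dot x (act g u - u)| <= r * (`|u| * K).
Proof.
pose C j := \sum_(k < n) `|act g (delta_mx ord0 k) ord0 j| + 1.
exists (\sum_j C j) => [|x u r xr].
  by apply: sumr_ge0 => j _; apply: addr_ge0 => //; apply: sumr_ge0.
rewrite !mulr_sumr.
by apply: (ler_norm_dot (C := fun j => `|u| * C j)) => // j; exact: normr_actB_coord_le.
Qed.

Lemma interior_cone_dot_lt0 t x g : interior (Cone act t) x ->
  act g t != t -> dot x (act g t - t) < 0.
Proof.
move=> /nbhs_ballP [e /= e0 ball_in_cone] gtt; set v := act g t - t.
have v_gt0 : 0 < sqnorm v by apply: sqnorm_gt0; rewrite subr_eq0.
have nv0 : 0 < `|v| + 1 by rewrite ltr_wpDl.
pose k := e / (2 * (`|v| + 1)).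
have k0 : 0 < k by rewrite divr_gt0 // mulr_gt0.
have kv : k * `|v| + k = e / 2 by rewrite /k; field; rewrite lt0r_neq0.
have : Cone act t (x + k *: v).
  apply: ball_in_cone; rewrite -ball_normE /= opprD addrA subrr add0r normrN.
  by rewrite normrZ gtr0_norm //; lra.
by move/(_ g); rewrite le_enorm_orbitE dotDZl; nra.
Qed.

(* [x . (g.m - m) = x . (g.t - t) - x . (g.u - u)] with [u = t - m]: the first
   term is uniformly negative on the compact [S], the second is O(|u|) on [S]. *)
Lemma near_compact_sub_cone_g (S : set 'rV[R]_n) t g :
  compact S -> S `<=` interior (Cone act t) -> regular_point act t ->
  \forall m \near t, forall x, S x -> enorm (x - m) <= enorm (x - act g m).
Proof.
move=> cS S_int t_reg.
have [gtt|gtt] := eqVneq (act g t) t.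
  rewrite (t_reg g gtt); apply/nbhs_ballP; exists 1 => [|m _ x _]; first exact: ltr01.
  by rewrite (proj1 act_group).
have [->|/set0P [s Ss]] := eqVneq S set0.
  by apply/nbhs_ballP; exists 1 => //; exact: ltr01.
set v := act g t - t.
have [c Sc c_max] : exists2 c, S c & forall x, S x -> dot x v <= dot c v.
  have [c Sc c_max] := compact_EVT_max (ex_intro _ s Ss) cS
    (continuous_subspaceT (continuous_dot (v := v))).
  by exists c => [|x Sx]; [rewrite -inE | apply: c_max; rewrite inE].
have cv_lt0 : dot c v < 0 by apply: interior_cone_dot_lt0 => //; apply: S_int.
have [M [_ SM]] := compact_bounded cS.
pose r := `|M| + 1.
have S_r x : S x -> forall j, `|x ord0 j| <= r.
  move=> Sx j; apply: le_trans (normr_coord_le _ _) _.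
  by apply: (SM r) => //; rewrite /r; apply: le_lt_trans (ler_norm M) _; lra.
have [K K0 dot_actB] := ler_norm_dot_actB g.
have r0 : 0 < r by rewrite ltr_wpDl.
have rK0 : 0 < r * K + 1 by rewrite ltr_wpDl // mulr_ge0 // ltW.
pose eta := - dot c v / (r * K + 1).
have eta0 : 0 < eta by rewrite divr_gt0 ?oppr_gt0.
have eta_rK : eta * (r * K + 1) = - dot c v by rewrite divfK // lt0r_neq0.
apply/nbhs_ballP; exists eta => // m; rewrite -ball_normE /= => tm_eta x Sx.
rewrite le_enorm_orbitE; set u := t - m.
have -> : act g m - m = v - (act g u - u).
  by rewrite /v /u !actB; apply/rowP => j; rewrite !mxE /=; ring.
rewrite dotBr.
have := lerNnormlW (dot_actB x u r (S_r x Sx)).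
have := c_max x Sx; have : 0 <= `|u| by []; nra.
Qed.

Lemma near_compact_sub_cone (S : set 'rV[R]_n) t :
  compact S -> S `<=` interior (Cone act t) -> regular_point act t ->
  \forall m \near t, S `<=` Cone act m.
Proof.
move=> cS S_int t_reg.
have near_g g := near_compact_sub_cone_g g cS S_int t_reg.
by apply: filterS (filter_forall _ near_g) => m Sm x Sx g; exact: Sm.
Qed.

End LinearIsometricAction.

Lemma measurable_lt_cst d (T : measurableType d) (R : realType) (f : T -> R) r :
  measurable_fun setT f -> measurable [set w | f w < r].
Proof.
move=> mf; have -> : [set w | f w < r] = setT `&` f @^-1` `]-oo, r[.
  by apply/seteqP; split => w /=; rewrite ?in_itv /= ?andbT //; move=> [_].
exact: mf.
Qed.

Lemma rat_row_approx (R : realType) n (x : 'rV[R]_n) (e : R) : 0 < e ->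
  exists q : 'rV[rat]_n, sqnorm (x - map_mx ratr q) < e.
Proof.
move=> e0; pose e' := Num.min e 1; pose dl := e' / n.+1%:R.
have e'0 : 0 < e' by rewrite lt_min e0 ltr01.
have e'1 : e' <= 1 by rewrite ge_min lexx orbT.
have dl0 : 0 < dl by rewrite divr_gt0.
have e'_dl : e' = (n%:R + 1) * dl by rewrite /dl -natr1 mulrC divfK.
have dl1 : dl <= 1 by have : (0 : R) <= n%:R by []; nra.
have : forall i : 'I_n, exists q : rat, ratr q \in `](x ord0 i - dl), (x ord0 i + dl)[.
  by move=> i; apply: rat_in_itvoo; lra.
move/choice => [f f_near]; exists (\row_i f i).
have : sqnorm (x - map_mx ratr (\row_i f i)) <= \sum_(i < n) dl.
  apply: ler_sum => i _; rewrite !mxE.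
  move: (f_near i); rewrite in_itv /= => /andP[fl fr].
  have : 0 < (ratr (f i) - x ord0 i + dl) * (x ord0 i + dl - ratr (f i)).
    by apply: mulr_gt0; lra.
  have : dl * dl <= dl by nra.
  rewrite expr2; nra.
rewrite sumr_const card_ord -mulr_natl => sq_le.
have e'e : e' <= e by rewrite ge_min lexx.
by apply: le_lt_trans sq_le _; nra.
Qed.

Section LawSupport.
Variables (R : realType) (n : nat) (d : measure_display) (T : measurableType d)
  (P : probability T R) (X : T -> 'rV[R]_n).
Hypothesis X_measurable : forall i : 'I_n, measurable_fun setT (fun w => X w ord0 i).

Lemma measurable_sqnormB (y : 'rV[R]_n) : measurable_fun setT (fun w => sqnorm (X w - y)).
Proof.
have -> : (fun w => sqnorm (X w - y)) =
    (fun w => \sum_(i <- index_enum 'I_n) (X w ord0 i - y ord0 i) ^+ 2).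
  by apply: funext => w; apply: eq_bigr => i _; rewrite !mxE.
by apply: measurable_sum => i; apply/measurable_funX/measurable_funB.
Qed.

Definition rat_ball (qk : 'rV[rat]_n * nat) : set T :=
  [set w | sqnorm (X w - map_mx ratr qk.1) < qk.2.+1%:R^-1].

Definition null_rat_ball (N : nat) : set T :=
  if unpickle N is Some qk then
    if P (rat_ball qk) == 0%E then rat_ball qk else set0
  else set0.

Lemma negligible_null_rat_ball N : P.-negligible (null_rat_ball N).
Proof.
rewrite /null_rat_ball; case: (unpickle N) => [qk|]; last exact: negligible_set0.
case: ifPn => [/eqP Pqk0|_]; last exact: negligible_set0.
by exists (rat_ball qk); split => //; apply/measurable_lt_cst/measurable_sqnormB.
Qed.

Lemma rat_ball_sub_ball (x : 'rV[R]_n) q k r : 0 < r ->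
  sqnorm (x - map_mx ratr q) < k.+1%:R^-1 -> 4 * k.+1%:R^-1 <= r ^+ 2 ->
  rat_ball (q, k) `<=` [set w | enorm (X w - x) < r].
Proof.
move=> r0 xq kr w; rewrite /rat_ball /= => wq; rewrite ltr_enorm //.
have := sqnormB_le (X w) (map_mx ratr q) x; rewrite sqnormBC in xq => tri.
move: (k.+1%:R^-1) kr xq wq => e; lra.
Qed.

(* Any point of X outside the support has a P-null rational ball around it. *)
Lemma ae_law_support : P.-negligible [set w | ~ law_support P X (X w)].
Proof.
apply: (negligibleS _ (negligible_bigcup negligible_null_rat_ball)).
move=> w /= Xw_out; apply: contrapT => not_covered; apply: Xw_out => r r0.
rewrite lt0e measure_ge0 andbT; apply/negP => /eqP ball0; apply: not_covered.
have [k kr] : exists k : nat, 4 / r ^+ 2 < k.+1%:R.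
  by exists (Num.truncn (4 / r ^+ 2)); rewrite truncnS_gt.
have eps0 : 0 < k.+1%:R^-1 :> R by rewrite invr_gt0.
have [q Xwq] := rat_row_approx (X w) eps0.
exists (pickle (q, k)) => //; rewrite /null_rat_ball pickleK.
suff -> : P (rat_ball (q, k)) == 0%E by [].
have eps_r : 4 * k.+1%:R^-1 <= r ^+ 2.
  rewrite ler_pdivrMr //; move: kr.
  by rewrite ltr_pdivrMr ?exprn_gt0 // mulrC => /ltW.
have ball_sq : [set w' | enorm (X w' - X w) < r] =
    [set w' | sqnorm (X w' - X w) < r ^+ 2].
  by apply/seteqP; split => w' /=; rewrite ltr_enorm.
rewrite eq_le measure_ge0 andbT -ball0.
apply: le_measure (rat_ball_sub_ball r0 Xwq eps_r); rewrite inE.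
- exact/measurable_lt_cst/measurable_sqnormB.
- by rewrite ball_sq; exact/measurable_lt_cst/measurable_sqnormB.
Qed.

End LawSupport.

Section SecondMoment.
Variables (R : realType) (n : nat) (d : measure_display) (T : measurableType d)
  (P : probability T R) (X : T -> 'rV[R]_n) (t : 'rV[R]_n).
Hypothesis X_measurable : forall i : 'I_n, measurable_fun setT (fun w => X w ord0 i).
Hypothesis X_L2 : (\int[P]_w ((enorm (X w)) ^+ 2)%:E < +oo)%E.
Hypothesis X_mean : forall i : 'I_n, ('E_P[fun w => X w ord0 i] = (t ord0 i)%:E)%E.

Lemma expectationE (f : T -> R) : ('E_P[f] = \int[P]_w (f w)%:E)%E.
Proof. by rewrite unlock. Qed.

Lemma integral_cst_prob (c : R) : (\int[P]_w c%:E = c%:E)%E.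
Proof. by have := expectationE (cst c); rewrite expectation_cst => <-. Qed.

Lemma integral_coord i : (\int[P]_w (X w ord0 i)%:E = (t ord0 i)%:E)%E.
Proof. by rewrite -X_mean expectationE. Qed.

Lemma integrable_sqnorm : P.-integrable setT (fun w => (sqnorm (X w))%:E).
Proof.
apply/integrableP; split.
  by apply/measurable_EFinP; under eq_fun do rewrite -[X _]subr0; exact: measurable_sqnormB.
under eq_integral do rewrite gee0_abs ?lee_fin ?sqnorm_ge0 // -sqr_enorm.
exact: X_L2.
Qed.

Lemma integrable_sqnormB m : P.-integrable setT (fun w => (sqnorm (X w - m))%:E).
Proof.
apply: (@le_integrable _ _ _ _ _ measurableT _
  (fun w => ((2 * sqnorm (X w))%:E + (2 * sqnorm (0 - m))%:E)%E)).
- exact/measurable_EFinP/measurable_sqnormB.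
- move=> w _; rewrite -EFinD !abse_EFin lee_fin.
  have := sqnormB_le (X w) 0 m; rewrite subr0.
  have := sqnorm_ge0 (X w); have := sqnorm_ge0 (0 - m); have := sqnorm_ge0 (X w - m).
  by move=> ? ? ? ?; rewrite !ger0_norm //; lra.
- apply: (integrableD measurableT); last exact: finite_measure_integrable_cst.
  under eq_fun do rewrite EFinM.
  exact: (integrableZl measurableT) integrable_sqnorm.
Qed.

Lemma integrable_coord i : P.-integrable setT (fun w => (X w ord0 i)%:E).
Proof.
apply: (@le_integrable _ _ _ _ _ measurableT _ (fun w => (1%:E + (sqnorm (X w))%:E)%E)).
- exact/measurable_EFinP.
- move=> w _; rewrite -EFinD !abse_EFin lee_fin.
  have Xi2 : X w ord0 i ^+ 2 <= sqnorm (X w).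
    rewrite /sqnorm (bigD1 i) //= lerDl; apply: sumr_ge0 => j _; exact: sqr_ge0.
  rewrite [leRHS]ger0_norm ?addr_ge0 ?sqnorm_ge0 //.
  rewrite -real_normK ?num_real // in Xi2.
  have := sqr_ge0 (`|X w ord0 i| - 1); nra.
- apply: (integrableD measurableT) integrable_sqnorm.
  exact: finite_measure_integrable_cst.
Qed.

Lemma integrable_coordB i :
  P.-integrable setT (fun w => ((X w ord0 i)%:E - (t ord0 i)%:E)%E).
Proof.
apply: (integrableB measurableT) (integrable_coord i) _.
exact: finite_measure_integrable_cst.
Qed.

Lemma integrable_coordBZ i c :
  P.-integrable setT (fun w => ((X w - t) ord0 i * c)%:E).
Proof.
under eq_fun do rewrite EFinM !mxE EFinB.
exact: (integrableZr measurableT) (integrable_coordB i).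
Qed.

Lemma integral_coordBZ i c : (\int[P]_w ((X w - t) ord0 i * c)%:E = 0)%E.
Proof.
under eq_integral do rewrite EFinM !mxE EFinB.
rewrite integralZr //; last exact: integrable_coordB.
rewrite integralB_EFin // ?integral_coord ?integral_cst_prob ?subee ?mul0e //.
- exact: integrable_coord.
- exact: finite_measure_integrable_cst.
Qed.

Lemma integrable_dot_centered v :
  P.-integrable setT (fun w => (dot (X w - t) v)%:E).
Proof.
rewrite /dot; under eq_fun do rewrite -sumEFin.
by apply: (integrable_sum measurableT) => i _; exact: integrable_coordBZ.
Qed.

Lemma integral_dot_centered v : (\int[P]_w (dot (X w - t) v)%:E = 0)%E.
Proof.
rewrite /dot; under eq_integral do rewrite -sumEFin.
rewrite integral_sum // => [|i]; last exact: integrable_coordBZ.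
by rewrite big1 // => i _; exact: integral_coordBZ.
Qed.

(* [E||X - m||^2 = E||X - t||^2 + ||t - m||^2] since [X - t] is centred. *)
Lemma mean_minimizes_sqnormB m :
  (\int[P]_w (sqnorm (X w - t))%:E <= \int[P]_w (sqnorm (X w - m))%:E)%E.
Proof.
under [leRHS]eq_integral do rewrite (sqnormB_split _ t) EFinD EFinD EFinM.
have integrable_dot2 :
    P.-integrable setT (fun w => (2%:E * (dot (X w - t) (t - m))%:E)%E).
  exact: (integrableZl measurableT) (integrable_dot_centered _).
rewrite integralD // ?integralD ?integralZl ?integral_dot_centered ?integral_cst_prob //.
- by rewrite mule0 add0e leeDl // lee_fin sqnorm_ge0.
- exact: integrable_dot_centered.
- exact: finite_measure_integrable_cst.
- exact: integrable_sqnormB.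
- by apply: (integrableD measurableT) integrable_dot2 _; exact: finite_measure_integrable_cst.
Qed.

End SecondMoment.

Lemma measurable_bigmin d (T : measurableType d) (R : realType) (I : Type)
    (s : seq I) (a : T -> R) (h : I -> T -> R) :
  measurable_fun setT a -> (forall i, measurable_fun setT (h i)) ->
  measurable_fun setT (fun w => \big[Num.min/a w]_(i <- s) h i w).
Proof.
move=> ma mh; elim: s => [|i s IHs]; first by under eq_fun do rewrite big_nil.
by under eq_fun do rewrite big_cons; exact: measurable_minr.
Qed.

Section OrbitMean.
Variables (R : realType) (n : nat) (gT : finGroupType)
  (act : gT -> 'rV[R]_n -> 'rV[R]_n)
  (d : measure_display) (T : measurableType d) (P : probability T R)
  (X : T -> 'rV[R]_n).
Hypothesis act_group : is_group_action act.
Hypothesis act_linear : linear_action act.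
Hypothesis act_isometric : isometric_action act.
Hypothesis X_measurable : forall i : 'I_n, measurable_fun setT (fun w => X w ord0 i).

Lemma measurable_act_coord g j : measurable_fun setT (fun w => act g (X w) ord0 j).
Proof.
under eq_fun do rewrite (act_coordE act_linear).
by apply: measurable_sum => i; apply: measurable_funM.
Qed.

Lemma measurable_min_orbit_dist2 m :
  measurable_fun setT (fun w => min_orbit_dist2 act (X w) m).
Proof.
apply: measurable_bigmin => [|g].
  by under eq_fun do rewrite sqr_enorm; exact: measurable_sqnormB.
under eq_fun do rewrite sqr_enorm /sqnorm.
apply: measurable_sum => j; under eq_fun do rewrite !mxE.
apply/measurable_funX/measurable_funB => //; exact: measurable_act_coord.
Qed.

Lemma Fmean_cone m : law_support P X `<=` Cone act m ->
  Fmean P act X m = (\int[P]_w (sqnorm (X w - m))%:E)%E.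
Proof.
move=> S_cone; rewrite /Fmean expectationE.
apply: ae_eq_integral => //.
- exact/measurable_EFinP/measurable_min_orbit_dist2.
- exact/measurable_EFinP/measurable_sqnormB.
- have [N [mN N0 out_N]] := ae_law_support P X_measurable.
  exists N; split => // w /= not_eq; apply: out_N => XwS; apply: not_eq => _.
  by rewrite (min_orbit_dist2_cone act_group act_linear act_isometric) //; exact: S_cone.
Qed.

End OrbitMean.

Theorem mainTheorem5 (R : realType) (n : nat) (gT : finGroupType)
  (act : gT -> 'rV[R]_n -> 'rV[R]_n)
  (d : measure_display) (T : measurableType d) (P : probability T R)
  (X : T -> 'rV[R]_n) (t0 : 'rV[R]_n) :
  is_group_action act -> linear_action act -> isometric_action act ->
  effective_action act ->
  (forall i : 'I_n, measurable_fun setT (fun w => X w ord0 i)) ->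
  (\int[P]_w ((enorm (X w)) ^+ 2)%:E < +oo)%E ->
  (forall i : 'I_n, ('E_P[fun w => X w ord0 i] = (t0 ord0 i)%:E)%E) ->
  regular_point act t0 ->
  compact (law_support P X) ->
  law_support P X `<=` interior (Cone act t0) ->
  \forall m \near t0, (Fmean P act X t0 <= Fmean P act X m)%E.
Proof.
move=> act_group act_linear act_isometric _ X_meas X_L2 X_mean t0_reg S_compact S_int.
have S_cone_t0 : law_support P X `<=` Cone act t0.
  by move=> x /S_int; exact: nbhs_singleton.
apply: filterS (near_compact_sub_cone act_group act_linear act_isometric
  S_compact S_int t0_reg) => m S_cone_m.
rewrite !(Fmean_cone act_group act_linear act_isometric X_meas) //.
exact: mean_minimizes_sqnormB.
Qed.
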